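(* Under the hypotheses and notation of the noisy quadratic model below (with $0<\eta h_j<1$ for all $j$, $\alpha\in(0,1]$, $\beta_i\ge0$, $\sum_{i=0}^{k-1}\beta_i=1$, $\beta_0<1$), the stationary variance of AvgLookahead $$\mathbb V^*_{\mathrm{AvgLA}}=\alpha^2\,\mathbf Y\,\big(\mathbf I-\mathbf A^2\big)^{-1}\,\eta^2\mathbf H^2\Sigma\,(\mathbf I-\mathbf M^2)^{-1}$$ satisfies, entrywise, $$\mathbb V^*_{\mathrm{AvgLA}}\ \le\ \mathbb V^*_{\mathrm{ERM}}:=\eta^2\mathbf H^2\Sigma\,(\mathbf I-\mathbf M^2)^{-1},$$ where $\mathbb V^*_{\mathrm{ERM}}$ is the stationary coordinatewise variance of plain SGD $\boldsymbol\theta_{t+1}=\mathbf M\boldsymbol\theta_t+\eta\mathbf H\mathbf c_t$.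
   Context: Noisy quadratic model: $\mathbf H=\mathrm{diag}(h_1,\dots,h_d)$, $\Sigma=\mathrm{diag}(\sigma_1^2,\dots,\sigma_d^2)$ with $\sigma_j^2\ge0$, stochastic loss $\mathcal L(\boldsymbol\theta;\mathbf c)=\tfrac12(\boldsymbol\theta-\mathbf c)^\top\mathbf H(\boldsymbol\theta-\mathbf c)$ with i.i.d. $\mathbf c\sim\mathcal N(\mathbf 0,\Sigma)$ drawn at each step; $\mathbf M=\mathbf I-\eta\mathbf H$. AvgLookahead: fast weights $\boldsymbol\theta_{t,0}=\boldsymbol\phi_t$, $\boldsymbol\theta_{t,i+1}=\mathbf M\boldsymbol\theta_{t,i}+\eta\mathbf H\mathbf c_{t,i}$, slow update $\boldsymbol\phi_{t+1}=(1-\alpha)\boldsymbol\phi_t+\alpha\sum_{i=0}^{k-1}\beta_i\boldsymbol\theta_{t,i}$. Here $\mathbf A=(1-\alpha)\mathbf I+\alpha\sum_{i=0}^{k-1}\beta_i\mathbf M^i$ and $\mathbf Y=\sum_{i=0}^{k-1}\beta_i^2(\mathbf I-\mathbf M^{2i})+2\sum_{i=0}^{k-1}\sum_{j=0}^{i-1}\beta_i\beta_j\mathbf M^{i-j}(\mathbf I-\mathbf M^{2j})$. All matrices are diagonal and all inequalities are entrywise. *)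

(* All matrices of the noisy quadratic model are diagonal,
   so each matrix is represented by its diagonal (a function 'I_d -> R) and
   matrix operations (products, inverses, powers) act coordinatewise. *)
From mathcomp Require Import all_boot all_order all_algebra.
Set Implicit Arguments. Unset Strict Implicit. Unset Printing Implicit Defensive.
Import Order.TTheory GRing.Theory Num.Theory.
Local Open Scope ring_scope.

Section NQM.
Variables (R : realFieldType) (d : nat).

Definition Mcoef (eta : R) (h : 'I_d -> R) (j : 'I_d) : R := 1 - eta * h j.

Definition Acoef (eta alpha : R) (k : nat) (beta : nat -> R) (h : 'I_d -> R)
    (j : 'I_d) : R :=
  (1 - alpha) + alpha * \sum_(i < k) beta i * Mcoef eta h j ^+ i.

Definition Ycoef (eta : R) (k : nat) (beta : nat -> R) (h : 'I_d -> R)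
    (j : 'I_d) : R :=
  let m := Mcoef eta h j in
  \sum_(i < k) beta i ^+ 2 * (1 - m ^+ (2 * i))
  + 2 * \sum_(i < k) \sum_(l < i) beta i * beta l * m ^+ (i - l) * (1 - m ^+ (2 * l)).

Definition V_ERM (eta : R) (h sigma2 : 'I_d -> R) (j : 'I_d) : R :=
  eta ^+ 2 * h j ^+ 2 * sigma2 j * (1 - Mcoef eta h j ^+ 2)^-1.

Definition V_AvgLA (eta alpha : R) (k : nat) (beta : nat -> R)
    (h sigma2 : 'I_d -> R) (j : 'I_d) : R :=
  alpha ^+ 2 * Ycoef eta k beta h j * (1 - Acoef eta alpha k beta h j ^+ 2)^-1
  * (eta ^+ 2 * h j ^+ 2 * sigma2 j * (1 - Mcoef eta h j ^+ 2)^-1).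

End NQM.

From mathcomp Require Import all_boot all_order all_algebra.
From mathcomp Require Import ring lra.
Import Order.TTheory GRing.Theory Num.Theory.
Local Open Scope ring_scope.

(* Every matrix of the noisy quadratic model is diagonal, so the theorem is a
   scalar inequality in each coordinate.  Fix a coordinate, let m = 1 - eta h
   be the SGD contraction factor (0 < m < 1) and S = sum_i beta_i m^i the
   averaged fast-weight contraction, so that A = 1 - alpha (1 - S).
   The proof has three steps:
   - expanding a squared sum into squares and cross terms, Y equals
     sum_i beta_i^2 + 2 sum_{l<i} beta_i beta_l m^(i-l) - S^2, hence
     Y <= (sum_i beta_i)^2 - S^2 = 1 - S^2 because m^(i-l) <= 1;
   - since beta_0 < 1 and m < 1, one has 0 <= S < 1;
   - with u = alpha (1 - S) in (0, 1], 1 - A^2 = u (2 - u), and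
     alpha^2 (1 - S^2) <= u (2 - u) reduces to alpha <= 1.
   Hence V*_AvgLA = [alpha^2 Y / (1 - A^2)] V*_ERM with a factor in
   [0, 1] applied to the nonnegative V*_ERM. *)

Lemma sqr_sum_ord (R : comPzRingType) (x : nat -> R) (k : nat) :
  (\sum_(i < k) x i) ^+ 2
  = \sum_(i < k) x i ^+ 2 + 2 * \sum_(i < k) \sum_(l < i) x i * x l.
Proof.
elim: k => [|k IH]; first by rewrite !big_ord0; ring.
by rewrite !big_ord_recr /= -mulr_sumr sqrrD IH; ring.
Qed.

Section OneCoordinate.
Context {R : realFieldType}.
Variables (k : nat) (beta : nat -> R).

Definition lookahead_mean (m : R) : R := \sum_(i < k) beta i * m ^+ i.

Definition Ypoly (m : R) : R :=
  \sum_(i < k) beta i ^+ 2 * (1 - m ^+ (2 * i))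
  + 2 * \sum_(i < k) \sum_(l < i) beta i * beta l * m ^+ (i - l) * (1 - m ^+ (2 * l)).

Lemma Ycoef_Ypoly (d : nat) (eta : R) (h : 'I_d -> R) (j : 'I_d) :
  Ycoef eta k beta h j = Ypoly (Mcoef eta h j).
Proof. by []. Qed.

Lemma Acoef_lookahead_mean (d : nat) (eta alpha : R) (h : 'I_d -> R) (j : 'I_d) :
  Acoef eta alpha k beta h j = 1 - alpha + alpha * lookahead_mean (Mcoef eta h j).
Proof. by []. Qed.

(* The subtracted parts of Y, beta_i^2 m^(2i) and beta_i beta_l m^(i-l) m^(2l),
   are exactly the diagonal and cross terms of S^2 = (sum_i beta_i m^i)^2. *)
Lemma Ypoly_expand (m : R) :
  Ypoly m = \sum_(i < k) beta i ^+ 2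
            + 2 * \sum_(i < k) \sum_(l < i) beta i * beta l * m ^+ (i - l)
            - lookahead_mean m ^+ 2.
Proof.
rewrite /Ypoly /lookahead_mean (sqr_sum_ord _ (fun i => beta i * m ^+ i)).
have diag : \sum_(i < k) beta i ^+ 2 * (1 - m ^+ (2 * i))
   = \sum_(i < k) beta i ^+ 2 - \sum_(i < k) (beta i * m ^+ i) ^+ 2.
  by rewrite -sumrB; apply: eq_bigr => i _; rewrite exprMn -exprM mulnC; ring.
have cross : \sum_(i < k) \sum_(l < i)
      beta i * beta l * m ^+ (i - l) * (1 - m ^+ (2 * l))
   = \sum_(i < k) \sum_(l < i) beta i * beta l * m ^+ (i - l)
     - \sum_(i < k) \sum_(l < i) (beta i * m ^+ i) * (beta l * m ^+ l).
  rewrite -sumrB; apply: eq_bigr => i _; rewrite -sumrB; apply: eq_bigr => l _.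
  have split_pow : m ^+ i = m ^+ (i - l) * m ^+ l by rewrite -exprD subnK // ltnW.
  by rewrite split_pow mulnC exprM; ring.
by rewrite diag cross; ring.
Qed.

Hypothesis beta_ge0 : forall i, (i < k)%N -> 0 <= beta i.

Lemma Ypoly_le (m : R) : 0 <= m <= 1 ->
  Ypoly m <= (\sum_(i < k) beta i) ^+ 2 - lookahead_mean m ^+ 2.
Proof.
move=> /andP[m_ge0 m_le1].
have cross_le : \sum_(i < k) \sum_(l < i) beta i * beta l * m ^+ (i - l)
                <= \sum_(i < k) \sum_(l < i) beta i * beta l.
  apply: ler_sum => i _; apply: ler_sum => l _.
  rewrite -[leRHS]mulr1 ler_wpM2l ?exprn_ile1 //.
  by rewrite mulr_ge0 // beta_ge0 // (ltn_trans (ltn_ord l)).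
by rewrite Ypoly_expand sqr_sum_ord; lra.
Qed.

Lemma lookahead_mean_ge0 (m : R) : 0 <= m -> 0 <= lookahead_mean m.
Proof.
by move=> m_ge0; apply: sumr_ge0 => i _; rewrite mulr_ge0 ?exprn_ge0 ?beta_ge0.
Qed.

(* S <= beta_0 + m (1 - beta_0) when the weights sum to 1; in particular
   S < 1 as soon as m < 1 and the average does not sit entirely on beta_0. *)
Lemma lookahead_mean_lt1 (m : R) : 0 <= m < 1 ->
  \sum_(i < k) beta i = 1 -> beta 0%N < 1 -> lookahead_mean m < 1.
Proof.
move=> /andP[m_ge0 m_lt1]; rewrite /lookahead_mean.
case: k beta_ge0 => [|k'] b_ge0.
  by rewrite big_ord0 => /eqP; rewrite eq_sym oner_eq0.
rewrite !big_ord_recl /= expr0 mulr1 => sum1 beta0_lt1.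
set rest := \sum_(i < k') beta (bump 0 i) in sum1 *.
have tail_le : \sum_(i < k') beta (bump 0 i) * m ^+ bump 0 i <= m * rest.
  rewrite /rest mulr_sumr; apply: ler_sum => i _.
  have bi_ge0 : 0 <= beta (bump 0 i) by apply: b_ge0; rewrite /bump add1n ltnS.
  rewrite mulrC ler_wpM2r // /bump add1n exprS -[leRHS]mulr1.
  by rewrite ler_wpM2l // exprn_ile1 // ltW.
have gap : 0 < (1 - m) * rest by rewrite mulr_gt0 //; lra.
lra.
Qed.

End OneCoordinate.

(* The scalar heart of the theorem: with u = alpha (1 - S) in (0, 1], the
   lookahead factor alpha^2 Y / (1 - A^2) is at most 1 whenever Y <= 1 - S^2. *)
Lemma lookahead_factor_le1 (R : realFieldType) (alpha S Y : R) :
  0 < alpha <= 1 -> 0 <= S < 1 -> Y <= 1 - S ^+ 2 ->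
  alpha ^+ 2 * Y / (1 - (1 - alpha + alpha * S) ^+ 2) <= 1.
Proof.
move=> /andP[alpha_gt0 alpha_le1] /andP[S_ge0 S_lt1] Y_le.
have u_gt0 : 0 < alpha * (1 - S) by rewrite mulr_gt0 // subr_gt0.
have u_le1 : alpha * (1 - S) <= 1 by nra.
have denom : 1 - (1 - alpha + alpha * S) ^+ 2
             = alpha * (1 - S) * (2 - alpha * (1 - S)) by ring.
have denom_gt0 : 0 < 1 - (1 - alpha + alpha * S) ^+ 2.
  by rewrite denom mulr_gt0 //; lra.
rewrite ler_pdivrMr // mul1r denom.
have slack : 0 <= alpha * (1 - S) * (2 - 2 * alpha) by rewrite mulr_ge0 //; lra.
nra.
Qed.

Theorem mainTheorem3 (R : realFieldType) (d : nat) (eta alpha : R) (k : nat)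
    (beta : nat -> R) (h sigma2 : 'I_d -> R)
    (Hh : forall j, 0 < eta * h j /\ eta * h j < 1)
    (Hsig : forall j, 0 <= sigma2 j)
    (Halpha : 0 < alpha /\ alpha <= 1)
    (Hbeta : forall i, (i < k)%N -> 0 <= beta i)
    (Hsum : \sum_(i < k) beta i = 1)
    (Hbeta0 : beta 0%N < 1) :
  forall j : 'I_d,
    V_AvgLA eta alpha k beta h sigma2 j <= V_ERM eta h sigma2 j.
Proof.
move=> j; have [eh_gt0 eh_lt1] := Hh j; have [alpha_gt0 alpha_le1] := Halpha.
set m := Mcoef eta h j.
have m_ge0 : 0 <= m by rewrite /m /Mcoef; lra.
have m_lt1 : m < 1 by rewrite /m /Mcoef; lra.
have S_ge0 : 0 <= lookahead_mean k beta m by apply: lookahead_mean_ge0.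
have S_lt1 : lookahead_mean k beta m < 1.
  by apply: lookahead_mean_lt1 => //; rewrite m_ge0.
have Y_le : Ypoly k beta m <= 1 - lookahead_mean k beta m ^+ 2.
  by rewrite -[1](expr1n _ 2) -Hsum Ypoly_le // m_ge0 ltW.
have VERM_ge0 : 0 <= V_ERM eta h sigma2 j.
  have ERM_denom_ge0 : 0 <= 1 - m ^+ 2 by rewrite subr_ge0 expr_le1 // ltW.
  by rewrite /V_ERM -/m divr_ge0 // mulr_ge0 ?Hsig // mulr_ge0 ?sqr_ge0.
rewrite /V_AvgLA -/(V_ERM eta h sigma2 j) ler_piMl //.
rewrite Ycoef_Ypoly Acoef_lookahead_mean -/m.
by rewrite lookahead_factor_le1 // ?alpha_gt0 ?S_ge0.
Qed.
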